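(* For $a_1,a_2\in[n]$, in $\mathbb{Q}[S_n]$, \[B_{a_1}B_{a_2}=\sum_{j=\max(a_1,a_2)}^{\min(a_1+a_2,n)}\frac{a_2!}{(j-a_1)!\,(a_1+a_2-j)!}\cdot\frac{a_1!}{(j-a_2)!}\,B_j.\]
   Context: Elements of $S_n$ are written in deck notation: a word $c_1\cdots c_n$ (a rearrangement of $1,\ldots,n$) is the deck with card $c_i$ in position $i$. Multiplication in $\mathbb{Q}[S_n]$: for $\sigma=c_1\cdots c_n$, $\tau=d_1\cdots d_n$, $\sigma\tau=c_{d_1}\cdots c_{d_n}$, extended bilinearly. For $a\in[n]$, $B_a$ is the sum of all words $c_1\cdots c_n\in S_n$ in which the letters $a+1,\ldots,n$ appear in increasing order from left to right. *)

From HB Require Import structures.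
From mathcomp Require Import all_boot all_order all_algebra all_fingroup.
Set Implicit Arguments. Unset Strict Implicit. Unset Printing Implicit Defensive.
Import GRing.Theory Num.Theory.
Local Open Scope ring_scope.

(* Deck notation: a permutation s : 'S_n is the word c_1 ... c_n with
   c_(i+1) = (s i) + 1 (0-based positions and card values in 'I_n). *)

Notation QSn n := {ffun 'S_n -> rat}.

(* The paper's product of words: (sigma tau) = c_(d_1) ... c_(d_n),
   i.e. position i holds sigma (tau i); in mathcomp this is (tau * sigma)%g. *)
Definition deck_mul n (s t : 'S_n) : 'S_n := (t * s)%g.

Definition qmul n (f g : QSn n) : QSn n :=
  [ffun p : 'S_n => \sum_(s : 'S_n) \sum_(t : 'S_n | deck_mul s t == p) f s * g t].

(* The word s has the letters a+1,...,n (0-based values a,...,n-1) in increasing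
   order from left to right: their positions s^-1 are increasing. *)
Definition tail_increasing n (a : nat) (s : 'S_n) : bool :=
  [forall x : 'I_n, forall y : 'I_n,
     ((a <= x)%N && (x < y)%N) ==> ((s^-1)%g x < (s^-1)%g y)%N].

Definition B n (a : nat) : QSn n :=
  [ffun s : 'S_n => if tail_increasing a s then 1 else 0].

Definition qscale n (c : rat) (f : QSn n) : QSn n := [ffun s => c * f s].

From HB Require Import structures.
From mathcomp Require Import all_boot all_order all_algebra all_fingroup.
From mathcomp Require Import zify ring.
Import GRing.Theory Num.Theory.

Set Implicit Arguments.
Unset Strict Implicit.
Unset Printing Implicit Defensive.

(* The words of [B_1] are the identity word with card [1] moved to an arbitrary
   position.  Multiplying a word by one of them relabels its cards, and counting
   the positions for which the result lies in [B_a] gives the recursion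
   [B_1 B_a = a B_a + B_(a+1)] (for [a < n]).  As [B_0] is the unit and the
   product is associative, [B_(a+1) B_b = B_1 (B_a B_b) - a B_a B_b], so by
   induction on [a1] the product [B_a1 B_a2] expands as [sum_j c_j B_j] with
   coefficients obeying [c'_(j+1) = (j + 1 - a1) c_(j+1) + c_j]; this recursion
   is solved by [c_j = binomial(a1, k) * a2^_k], [k = a1 + a2 - j], which is the
   coefficient of the statement. *)

Definition increasing_on (f : nat -> nat) (a N : nat) : Prop :=
  forall x y, a <= x -> x < y -> y < N -> f x < f y.

Lemma eq_increasing_on f g a N :
  {in gtn N, f =1 g} -> increasing_on f a N -> increasing_on g a N.
Proof. by move=> fg f_incr x y ax xy yN; rewrite -!fg ?inE; [exact: f_incr|lia|lia]. Qed.

Definition to_front (k x : nat) : nat :=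
  if x == k then 0 else if x < k then x.+1 else x.

Lemma to_front_self k : to_front k k = 0.
Proof. by rewrite /to_front eqxx. Qed.

Lemma to_front_lt k x : x < k -> to_front k x = x.+1.
Proof. by rewrite /to_front => xk; rewrite xk ifF //; apply/eqP; lia. Qed.

Lemma to_front_gt k x : k < x -> to_front k x = x.
Proof. by rewrite /to_front => kx; rewrite !ifF //; apply/negbTE; [lia|apply/eqP; lia]. Qed.

Lemma to_front_gt0 k x : x != k -> 0 < to_front k x.
Proof.
move=> xk; rewrite /to_front (negbTE xk).
by case: (ltnP x k) => // kx; move/eqP: xk; lia.
Qed.

Lemma to_front_ltn k x y : x < y -> x != k -> y != k -> to_front k x < to_front k y.
Proof.
move=> xy xk yk; rewrite /to_front (negbTE xk) (negbTE yk).
by move/eqP: xk; move/eqP: yk; case: (ltnP x k); case: (ltnP y k) => /=; lia.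
Qed.

Section ToFront.
Variables (N a : nat) (f : nat -> nat).

Definition before0 (k : nat) : bool := (k < N) && ((k <= a) || (f k < f 0)).

Lemma increasing_on_to_front_lt k : k < a ->
  increasing_on (f \o to_front k) a N <-> increasing_on f a N.
Proof.
move=> ka; split=> f_incr x y ax xy yN.
  by have := f_incr x y ax xy yN; rewrite /= !to_front_gt //; lia.
by rewrite /= !to_front_gt; [exact: f_incr|lia|lia].
Qed.

Hypothesis f_inj : {in gtn N &, injective f}.

(* If [f] gives the positions of the cards of a word, [f \o to_front k] gives
   those of the word where card [0] is renamed [k] and cards [1..k] are renamed
   [0..k-1]; its cards from [a] on increase iff the old cards above [a] do and
   old card [0] lies after old card [k] (if [k > a]) and before old card
   [k + 1] (if [k + 1 < N]). *)
Lemma increasing_on_to_front_ge k : a <= k < N ->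
  increasing_on (f \o to_front k) a N <->
  [/\ increasing_on f a.+1 N, before0 k & ~~ before0 k.+1].
Proof.
move=> /andP[ak kN]; split=> [g_incr|[f_incr Lk nLk]].
  have g_lt x y : a <= x -> x < y -> y < N -> f (to_front k x) < f (to_front k y).
    exact: g_incr.
  split.
  - move=> x y ax xy yN.
    have shift z : a < z <= k -> to_front k z.-1 = z.
      by move=> zk; rewrite to_front_lt ?prednK //; lia.
    have [xk|kx] := leqP x k; last first.
      by have := g_lt x y; rewrite !to_front_gt //; [apply; lia|lia].
    have [yk|ky] := leqP y k.
      by have := g_lt x.-1 y.-1; rewrite !shift; [apply; lia|lia|lia].
    by have := g_lt x.-1 y; rewrite shift ?to_front_gt; [apply; lia|lia|lia].
  - rewrite /before0 kN /=; have [//|ak'] := leqP k a.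
    have sk : to_front k k.-1 = k by rewrite to_front_lt ?prednK //; lia.
    by have := g_lt k.-1 k; rewrite sk to_front_self; apply; lia.
  - rewrite /before0 negb_and; case: (ltnP k.+1 N) => kN' //=.
    rewrite negb_or -ltnNge ltnS ak /= -leqNgt.
    by have := g_lt k k.+1; rewrite to_front_self to_front_gt // => h; apply/ltnW/h.
move=> x y ax xy yN /=.
have [xk|xk|xk] := ltngtP x k.
- have [yk|yk|->] := ltngtP y k.
  + by rewrite !to_front_lt //; apply: f_incr; lia.
  + by rewrite to_front_lt // to_front_gt //; apply: f_incr; lia.
  + rewrite to_front_lt // to_front_self.
    move: Lk; rewrite /before0 kN /=; have [|ak' /= fk] := leqP k a; first by lia.
    have [->|ne] := eqVneq x.+1 k; first exact: fk.
    by apply: ltn_trans fk; apply: f_incr; lia.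
- by rewrite !to_front_gt //; [apply: f_incr; lia | lia].
- subst x; rewrite to_front_self to_front_gt //.
  have kN' : k.+1 < N by lia.
  move: nLk; rewrite /before0 kN' /= negb_or -ltnNge ltnS => /andP[_].
  rewrite -leqNgt leq_eqVlt => /orP[/eqP f0k|f0].
    by have := f_inj (ltn_trans (ltn0Sn k) kN') kN' f0k.
  have [->|ne] := eqVneq y k.+1; first exact: f0.
  by apply: ltn_trans f0 _; apply: f_incr; lia.
Qed.

Lemma before0_succ k : a <= k -> increasing_on f a.+1 N -> before0 k.+1 -> before0 k.
Proof.
move=> ak f_incr /andP[kN /orP[ka|fk]]; apply/andP; split; try lia.
have [//|ak'] := leqP k a; apply/orP; right.
by apply: ltn_trans fk; apply: f_incr; lia.
Qed.

End ToFront.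

Lemma sum_nat_switch (P : pred nat) m n : m <= n -> P m -> ~~ P n ->
  (forall k, m <= k < n -> P k.+1 -> P k) ->
  \sum_(m <= k < n) (P k && ~~ P k.+1) = 1.
Proof.
move=> mn Pm nPn P_succ.
rewrite (eq_big_nat _ _ (F2 := fun k => ~~ P k.+1 - ~~ P k)); last first.
  by move=> k /P_succ; case: (P k); case: (P k.+1) => // /(_ isT).
rewrite (telescope_sumn_in (f := fun k => ~~ P k)) // ?Pm ?(negbTE nPn) //.
by move=> k /P_succ; case: (P k); case: (P k.+1) => // /(_ isT).
Qed.

Lemma perm_incr_eq1 m (w : 'S_m) : {homo w : x y / x < y} -> w = 1%g.
Proof.
have id_le (v : 'S_m) : {homo v : x y / x < y} -> forall x : 'I_m, x <= v x.
  move=> v_incr x; elim: {x}(nat_of_ord x) {-2}x (erefl (nat_of_ord x)) => [|i IH] x ex.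
    by rewrite ex.
  have im : i < m by have := ltn_ord x; lia.
  have := IH (Ordinal im) erefl; have := v_incr (Ordinal im) x; rewrite /= ex.
  by move=> /(_ (ltnSn _)); lia.
move=> w_incr; have wV_incr : {homo w^-1%g : x y / x < y}.
  move=> x y xy; case: (ltngtP (w^-1%g x) (w^-1%g y)) => // [yx|/val_inj/perm_inj exy].
    by have := w_incr _ _ yx; rewrite !permKV; lia.
  by move: xy; rewrite exy ltnn.
apply/permP => x; apply: val_inj; rewrite perm1 /=.
by have := id_le _ w_incr x; have := id_le _ wV_incr (w x); rewrite permK; lia.
Qed.

Lemma tail_increasing0 n (s : 'S_n) : tail_increasing 0 s = (s == 1%g).
Proof.
apply/idP/eqP => [s_incr|->].
  suff sV1 : s^-1%g = 1%g by rewrite -[s]invgK sV1 invg1.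
  by apply: perm_incr_eq1 => x y xy; exact: (implyP (forallP (forallP s_incr x) y)).
by apply/forallP => x; apply/forallP => y; apply/implyP => /andP[_]; rewrite invg1 !perm1.
Qed.

Section FrontPerm.
Variable n : nat.

(* [(front_perm k)^-1] is the word with card [1] at position [k + 1] and the
   other cards in increasing order. *)
Definition front_perm (k : 'I_n.+1) : 'S_n.+1 := lift_perm ord0 k 1.

Lemma front_perm0 k : front_perm k ord0 = k.
Proof. exact: lift_perm_id. Qed.

Lemma front_perm_lift k j : front_perm k (lift ord0 j) = lift k j.
Proof. by rewrite /front_perm lift_perm_lift perm1. Qed.

Lemma front_permV k z : (front_perm k)^-1%g z = to_front k z :> nat.
Proof.
case: (unliftP k z) => [j ->|->]; last by rewrite to_front_self -{2}(front_perm0 k) permK.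
rewrite -[in LHS]front_perm_lift permK lift0 /to_front /= /bump.
by case: (leqP k j) => /= kj; case: ifP => [/eqP|_]; try case: ifP; lia.
Qed.

Definition positions (s : 'S_n.+1) (x : nat) : nat := s^-1%g (inord x).

Lemma positions_inj s : {in gtn n.+1 &, injective (positions s)}.
Proof.
move=> x y xN yN /val_inj/perm_inj exy.
by rewrite -(inordK xN) -(inordK yN) exy.
Qed.

Lemma tail_increasingP a s :
  reflect (increasing_on (positions s) a n.+1) (tail_increasing a s).
Proof.
apply: (iffP forallP) => [s_incr x y ax xy yN|s_incr x].
  have xN : x < n.+1 by lia.
  have /implyP := forallP (s_incr (inord x)) (inord y).
  by rewrite !inordK //; apply; rewrite ax.
apply/forallP => y; apply/implyP => /andP[ax xy].
by have := s_incr x y ax xy (ltn_ord y); rewrite /positions !inord_val.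
Qed.

Lemma positions_mul_front s k :
  {in gtn n.+1, positions (s * front_perm k)%g =1 positions s \o to_front k}.
Proof.
move=> x xN; rewrite /positions invMg permM /=; congr (nat_of_ord (s^-1%g _)).
have e := front_permV k (inord x); rewrite inordK // in e.
by apply: val_inj; rewrite /= e inordK // -e ltn_ord.
Qed.

Lemma tail_increasing_mul_front a s k :
  tail_increasing a (s * front_perm k)%g <-> increasing_on (positions s \o to_front k) a n.+1.
Proof.
split=> [/tail_increasingP|s_incr]; first exact/eq_increasing_on/positions_mul_front.
by apply/tail_increasingP; apply: eq_increasing_on s_incr => x /positions_mul_front ->.
Qed.

Lemma tail_increasing1E :
  [set s | tail_increasing 1 s] = [set (front_perm k)^-1%g | k : 'I_n.+1].
Proof.
apply/setP => s; rewrite inE; apply/idP/imsetP => [s_incr|[k _ ->]]; last first.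
  apply/forallP => x; apply/forallP => y; apply/implyP => /andP[x1 xy]; rewrite invgK.
  case: (unliftP ord0 x) => [i ex|ex]; last by move: x1; rewrite ex.
  case: (unliftP ord0 y) => [j ey|ey]; last by move: xy; rewrite ey.
  move: xy; rewrite ex ey !front_perm_lift !lift0 /= /bump.
  by case: (leqP k i); case: (leqP k j) => /=; lia.
set k := s^-1%g ord0; exists k => //.
suff: (s^-1 * (front_perm k)^-1 = 1)%g.
  by move/eqP; rewrite -eq_mulgV1 => /eqP <-; rewrite invgK.
have sV_neq z : z != ord0 -> s^-1%g z != k :> nat.
  by apply: contraNneq => /val_inj/perm_inj ->.
apply: perm_incr_eq1 => x y xy; rewrite !permM !front_permV.
have y0 : y != ord0 by apply: contraTneq xy => ->.
have [->|x0] := eqVneq x ord0; first by rewrite to_front_self to_front_gt0 ?sV_neq.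
apply: to_front_ltn; rewrite ?sV_neq //.
move/tail_increasingP: s_incr => /(_ x y); rewrite /positions !inord_val.
by apply=> //; rewrite lt0n.
Qed.

End FrontPerm.

Lemma count_tail_increasing_mul_front n a (p : 'S_n.+1) : a <= n.+1 ->
  \sum_(k < n.+1) tail_increasing a (p * front_perm k)%g =
  a * tail_increasing a p + ((a < n.+1) && tail_increasing a.+1 p).
Proof.
move=> aN; set f := positions p.
have f_inj : {in gtn n.+1 &, injective f} by apply: positions_inj.
have tiE k : k < n.+1 -> tail_increasing a (p * front_perm (inord k))%g <->
                        increasing_on (f \o to_front k) a n.+1.
  by move=> kN; rewrite tail_increasing_mul_front inordK.
transitivity (\sum_(0 <= k < n.+1) tail_increasing a (p * front_perm (inord k))%g).
  by rewrite big_mkord; apply: eq_bigr => k _; rewrite inord_val.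
rewrite (big_cat_nat _ (n := a)) //=.
rewrite (eq_big_nat _ _ (F2 := fun=> nat_of_bool (tail_increasing a p))); last first.
  move=> k /andP[_ ka]; have kN : k < n.+1 by apply: leq_trans ka aN.
  congr nat_of_bool; apply/idP/idP => [/(tiE _ kN)|/tail_increasingP].
    by move/(increasing_on_to_front_lt _ f ka)/tail_increasingP.
  by move=> p_incr; apply/(tiE _ kN)/(increasing_on_to_front_lt _ f ka).
rewrite sum_nat_const_nat subn0; congr (_ + _).
rewrite (eq_big_nat _ _ (F2 := fun k => nat_of_bool
  [&& tail_increasing a.+1 p, before0 n.+1 a f k & ~~ before0 n.+1 a f k.+1])).
  have [/tail_increasingP p_incr|_] := boolP (tail_increasing a.+1 p); last first.
    by rewrite andbF big1.
  have [an|] := ltnP a n.+1; last by move=> na; rewrite big_geq.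
  rewrite sum_nat_switch // /before0 ?an ?leqnn ?ltnn //.
  by move=> k /andP[ak _]; apply: before0_succ.
move=> k akN; have /andP[ak kN] := akN.
congr nat_of_bool; apply/idP/and3P => [/(tiE _ kN)|[/tail_increasingP p_incr Lk nLk]].
  by move/(increasing_on_to_front_ge f_inj akN) => [/tail_increasingP].
by apply/(tiE _ kN)/(increasing_on_to_front_ge f_inj akN).
Qed.

Local Open Scope ring_scope.

Lemma qmulE n (f g : QSn n) p : qmul f g p = \sum_s f s * g (p * s^-1)%g.
Proof.
rewrite ffunE; apply: eq_bigr => s _; rewrite (big_pred1 (p * s^-1)%g) // => t /=.
by rewrite /deck_mul; apply/eqP/eqP => [<-|->]; rewrite ?mulgK ?mulgKV.
Qed.

Lemma BE n a s : B n a s = (tail_increasing a s)%:R.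
Proof. by rewrite ffunE; case: ifP. Qed.

Lemma qmulA n (f g h : QSn n) : qmul (qmul f g) h = qmul f (qmul g h).
Proof.
apply/ffunP => x; rewrite !qmulE.
under eq_bigr do rewrite qmulE mulr_suml.
under [RHS]eq_bigr do rewrite qmulE mulr_sumr.
rewrite exchange_big /=; apply: eq_bigr => u _.
rewrite (reindex_inj (mulIg u)) /=; apply: eq_bigr => v _.
by rewrite mulgK invMg mulgA mulrA.
Qed.

Lemma sum_qscaleE n (r : seq nat) (c : nat -> rat) (g : nat -> QSn n) x :
  (\sum_(j <- r) qscale (c j) (g j)) x = \sum_(j <- r) c j * g j x.
Proof. by rewrite sum_ffunE; apply: eq_bigr => j _; rewrite ffunE. Qed.

Lemma qmul_sum_qscaler n (f : QSn n) (r : seq nat) (c : nat -> rat) (g : nat -> QSn n) x :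
  qmul f (\sum_(j <- r) qscale (c j) (g j)) x = \sum_(j <- r) c j * qmul f (g j) x.
Proof.
rewrite qmulE; under eq_bigr do rewrite sum_qscaleE mulr_sumr.
rewrite exchange_big /=; apply: eq_bigr => j _; rewrite qmulE mulr_sumr.
by apply: eq_bigr => s _; rewrite mulrCA.
Qed.

Lemma qscale0 n (f : QSn n) : qscale 0 f = 0.
Proof. by apply/ffunP => s; rewrite !ffunE mul0r. Qed.

Lemma qmulB0l n (g : QSn n) : qmul (B n 0) g = g.
Proof.
apply/ffunP => x; rewrite qmulE (bigD1 1%g) //= big1 ?addr0.
  by rewrite BE tail_increasing0 eqxx mul1r invg1 mulg1.
by move=> s /negbTE s1; rewrite BE tail_increasing0 s1 mul0r.
Qed.

Lemma qmulB1 n a p : (a <= n.+1)%N ->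
  qmul (B n.+1 1) (B n.+1 a) p =
  a%:R * B n.+1 a p + (if (a < n.+1)%N then B n.+1 a.+1 p else 0).
Proof.
move=> aN; rewrite qmulE.
transitivity (\sum_(s in [set s | tail_increasing 1 s]) B n.+1 a (p * s^-1)%g).
  rewrite [RHS]big_mkcond; apply: eq_bigr => s _.
  by rewrite inE BE; case: tail_increasing; rewrite ?mul1r ?mul0r.
rewrite tail_increasing1E big_imset /=; last first.
  by move=> k1 k2 _ _ /invg_inj e; rewrite -(front_perm0 k1) e front_perm0.
under eq_bigr do rewrite invgK BE.
rewrite -natr_sum count_tail_increasing_mul_front // natrD natrM !BE.
by case: (a < n.+1)%N.
Qed.

Definition prodB_coef (a1 a2 j : nat) : nat :=
  if (j <= a1 + a2)%N then 'C(a1, a1 + a2 - j) * a2 ^_ (a1 + a2 - j) else 0.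

Lemma prodB_coef_out a1 a2 j :
  ((j < maxn a1 a2) || (a1 + a2 < j))%N -> prodB_coef a1 a2 j = 0%N.
Proof.
rewrite /prodB_coef; case: ifP => // ja jout.
have [ja1|a1j] := ltnP j a1; first by rewrite ffact_small ?muln0 //; lia.
by rewrite bin_small ?mul0n //; lia.
Qed.

Lemma prodB_coef0l a2 j : prodB_coef 0 a2 j = (j == a2).
Proof.
rewrite /prodB_coef add0n bin0n.
have [->|ne] := eqVneq j a2; first by rewrite leqnn subnn.
by case: ifP => // ja2; rewrite (_ : (a2 - j == 0)%N = false) //; apply/negbTE; lia.
Qed.

Lemma prodB_coefS (R : pzRingType) a1 a2 j :
  (prodB_coef a1.+1 a2 j.+1)%:R =
  (prodB_coef a1 a2 j.+1)%:R * (j.+1%:R - a1%:R) + (prodB_coef a1 a2 j)%:R :> R.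
Proof.
have [ja1|a1j] := ltnP j.+1 a1.
  by rewrite !prodB_coef_out ?mul0r ?addr0 //; lia.
rewrite -natrB // -natrM -natrD; congr _%:R; rewrite /prodB_coef.
case: ifP => c1; case: ifP => c2; case: ifP => c3; try lia.
  have e1 : (a1.+1 + a2 - j.+1 = (a1 + a2 - j.+1).+1)%N by lia.
  have e2 : (a1 + a2 - j = (a1 + a2 - j.+1).+1)%N by lia.
  have e3 : (j.+1 - a1 = a2 - (a1 + a2 - j.+1))%N by lia.
  rewrite e1 e2 e3; set k := (a1 + a2 - j.+1)%N.
  by rewrite binS ffactnSr; ring.
have e1 : (a1.+1 + a2 - j.+1 = 0)%N by lia.
have e2 : (a1 + a2 - j = 0)%N by lia.
by rewrite e1 e2 !bin0 !ffactn0 mul0n.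
Qed.

Lemma sum_prodB_coefS (R : comNzRingType) N a1 a2 (b : nat -> R) :
  \sum_(0 <= j < N.+1)
    (prodB_coef a1 a2 j)%:R * (j%:R * b j + (if (j < N)%N then b j.+1 else 0))
  - a1%:R * \sum_(0 <= j < N.+1) (prodB_coef a1 a2 j)%:R * b j
  = \sum_(0 <= j < N.+1) (prodB_coef a1.+1 a2 j)%:R * b j.
Proof.
rewrite mulr_sumr -sumrB.
rewrite (eq_bigr (fun j => (prodB_coef a1 a2 j)%:R * (j%:R - a1%:R) * b j +
   (prodB_coef a1 a2 j)%:R * (if (j < N)%N then b j.+1 else 0))); last by move=> j _; ring.
rewrite big_split /= big_nat_recl // [X in _ + X = _]big_nat_recr //= ltnn mulr0 addr0.
have -> : (prodB_coef a1 a2 0)%:R * (0%:R - a1%:R) * b 0%N = 0.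
  by case: a1 => [|a1]; rewrite ?subrr ?mulr0 ?mul0r // prodB_coef_out ?mulr0n ?mul0r //; lia.
rewrite [RHS]big_nat_recl // (@prodB_coef_out a1.+1) ?mulr0n ?mul0r ?add0r; last lia.
rewrite -big_split /=.
by apply: eq_big_nat => j /andP[_ jN]; rewrite jN prodB_coefS; ring.
Qed.

Lemma prodB_coefE a1 a2 j : (maxn a1 a2 <= j <= a1 + a2)%N ->
  (prodB_coef a1 a2 j)%:R = (a2`!)%:R / (((j - a1)`!)%:R * ((a1 + a2 - j)`!)%:R) *
             ((a1`!)%:R / ((j - a2)`!)%:R) :> rat.
Proof.
move=> /andP[ja ja']; rewrite /prodB_coef ja'.
have fact_neq0 m : m`!%:R != 0 :> rat by rewrite pnatr_eq0 -lt0n fact_gt0.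
have := @bin_fact a1 (a1 + a2 - j) ltac:(lia).
have := @ffact_fact a2 (a1 + a2 - j) ltac:(lia).
have -> : (a1 - (a1 + a2 - j) = j - a2)%N by lia.
have -> : (a2 - (a1 + a2 - j) = j - a1)%N by lia.
move=> <- <-; rewrite !natrM.
by field; rewrite !fact_neq0.
Qed.

Lemma qmulB_expansion n a1 a2 : (a1 <= n.+1)%N -> (a2 <= n.+1)%N ->
  qmul (B n.+1 a1) (B n.+1 a2) =
  \sum_(0 <= j < n.+2) qscale (prodB_coef a1 a2 j)%:R (B n.+1 j).
Proof.
move=> + a2N; elim: a1 => [|a1 IH] a1N.
  apply/ffunP => x; rewrite qmulB0l sum_qscaleE.
  have a2I : a2 \in index_iota 0 n.+2 by rewrite mem_index_iota; lia.
  rewrite (bigD1_seq a2 a2I (iota_uniq 0 n.+2)) /= prodB_coef0l eqxx mul1r.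
  rewrite big1_seq ?addr0 // => j /andP[ja2 _].
  by rewrite prodB_coef0l (negbTE ja2) mul0r.
have B_succ s : B n.+1 a1.+1 s = qmul (B n.+1 1) (B n.+1 a1) s - a1%:R * B n.+1 a1 s.
  by rewrite qmulB1 ?(ltnW a1N) // a1N addrAC subrr add0r.
apply/ffunP => x; rewrite qmulE.
under eq_bigr do rewrite B_succ mulrBl -mulrA.
rewrite sumrB -mulr_sumr -!qmulE qmulA IH ?(ltnW a1N) // qmul_sum_qscaler !sum_qscaleE.
rewrite -(sum_prodB_coefS n.+1 a1 a2 (fun j => B n.+1 j x)).
by congr (_ - _); apply: eq_big_nat => j /andP[_ jN]; rewrite qmulB1.
Qed.

Theorem mainTheorem7 (n a1 a2 : nat) :
  (1 <= a1 <= n)%N -> (1 <= a2 <= n)%N ->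
  qmul (B n a1) (B n a2) =
  \sum_(maxn a1 a2 <= j < (minn (a1 + a2) n).+1)
     qscale ((a2`!)%:R / (((j - a1)`!)%:R * ((a1 + a2 - j)`!)%:R) *
             ((a1`!)%:R / ((j - a2)`!)%:R) : rat) (B n j).
Proof.
case: n => [|n] /andP[a1_gt0 a1N] /andP[a2_gt0 a2N]; first by lia.
rewrite qmulB_expansion //.
rewrite (@big_cat_nat _ _ _ (maxn a1 a2) 0 n.+2) //=; last by lia.
rewrite (@big_cat_nat _ _ _ (minn (a1 + a2) n.+1).+1 (maxn a1 a2) n.+2) /=; [|lia|lia].
have vanish j : ((j < maxn a1 a2) || (a1 + a2 < j))%N ->
    qscale (prodB_coef a1 a2 j)%:R (B n.+1 j) = 0.
  by move/prodB_coef_out ->; rewrite qscale0.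
rewrite big1_seq ?add0r => [|j /andP[_]]; last first.
  by rewrite mem_index_iota => ja; apply: vanish; lia.
rewrite [X in _ + X]big1_seq ?addr0 => [|j /andP[_]]; last first.
  by rewrite mem_index_iota => ja; apply: vanish; lia.
by apply: eq_big_nat => j ja; rewrite prodB_coefE //; lia.
Qed.
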